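(* Let $n\ge 2$, $f\in\mathfrak{F}_{sc}$, and let $\rho$ be a density matrix on $\mathbb{C}^n$ whose diagonal entries $\rho_{11},\dots,\rho_{nn}$ are all strictly positive. Let $CM(\rho)=\Delta(\rho)^{-1/2}\rho\,\Delta(\rho)^{-1/2}$. If $CM(\rho)$ is a convex combination of rank-one correlation matrices, then there exists a pure state decomposition $\mathfrak{D}$ of $\rho$ with $\bar C_f(\mathfrak{D})=f(\rho_{11},\rho_{22},\dots,\rho_{nn})$.
   Context: Fix the reference orthonormal basis $\{|i\rangle\}_{i=1}^n$ of $\mathbb{C}^n$. Let $\Omega$ be the probability simplex in $\mathbb{R}^n$. $\mathfrak{F}_{sc}$ denotes the set of functions $f:\Omega\to\mathbb{R}$ such that (i) $f((1,0,\dots,0)^T)=0$; (ii) $f(P\mathbf{x})=f(\mathbf{x})$ for every permutation matrix $P$; (iii) $f$ is concave. For a unit vector $|\psi\rangle=\sum_i\psi_i|i\rangle$, $C_f(|\psi\rangle)=f(|\psi_1|^2,\dots,|\psi_n|^2)$. A pure state decomposition of $\rho$ is a finite family $\{p_k,|\psi_k\rangle\}$ with $p_k>0$, $\sum_kp_k=1$, unit vectors $|\psi_k\rangle$ and $\rho=\sum_kp_k|\psi_k\rangle\langle\psi_k|$; its average coherence is $\bar C_f(\mathfrak{D})=\sum_kp_kC_f(|\psi_k\rangle)$. $\Delta(X)$ is the diagonal matrix with the same diagonal entries as $X$ in the reference basis. A correlation matrix is a positive semidefinite matrix all of whose diagonal entries equal $1$. *)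

From HB Require Import structures.
From mathcomp Require Import all_boot all_order all_algebra all_fingroup.
From mathcomp Require Import complex.
Set Implicit Arguments.
Unset Strict Implicit.
Unset Printing Implicit Defensive.
Import Order.TTheory GRing.Theory Num.Theory.
Local Open Scope ring_scope.
Local Open Scope complex_scope.

Section Defs.
Variable R : rcfType.
Local Notation C := R[i].
Variable n : nat.

Definition mxdag (m k : nat) (A : 'M[C]_(m, k)) : 'M[C]_(k, m) :=
  (map_mx (@conjc R) A)^T.

Definition hermitian (A : 'M[C]_n) : Prop := mxdag A = A.

Definition psd (A : 'M[C]_n) : Prop :=
  hermitian A /\ forall v : 'cV[C]_n, 0 <= (mxdag v *m A *m v) 0 0.

Definition density_matrix (A : 'M[C]_n) : Prop := psd A /\ \tr A = 1.

Definition correlation_matrix (A : 'M[C]_n) : Prop :=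
  psd A /\ forall i, A i i = 1.

Definition Delta (X : 'M[C]_n) : 'M[C]_n := diag_mx (\row_i X i i).

Definition Delta_inv_sqrt (X : 'M[C]_n) : 'M[C]_n :=
  diag_mx (\row_i (sqrtC (X i i))^-1).

Definition CM (rho : 'M[C]_n) : 'M[C]_n :=
  Delta_inv_sqrt rho *m rho *m Delta_inv_sqrt rho.

Definition convex_comb_rank1_corr (M : 'M[C]_n) : Prop :=
  exists (k : nat) (w : 'I_k -> R) (Ms : 'I_k -> 'M[C]_n),
    [/\ forall j, 0 <= w j,
        \sum_j w j = 1,
        forall j, correlation_matrix (Ms j) /\ \rank (Ms j) = 1%N
      & M = \sum_j (w j)%:C *: Ms j].

Definition in_simplex (x : 'rV[R]_n) : Prop :=
  (forall i, 0 <= x 0 i) /\ \sum_i x 0 i = 1.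

(* the class F_sc; f is only constrained on the simplex *)
Definition F_sc (f : 'rV[R]_n -> R) : Prop :=
  [/\ (forall i : 'I_n, val i = 0%N -> f (\row_j (j == i)%:R) = 0),
      (forall (s : 'S_n) x, in_simplex x -> f (col_perm s x) = f x)
    & (forall x y (t : R), in_simplex x -> in_simplex y -> 0 <= t <= 1 ->
         t * f x + (1 - t) * f y <= f (t *: x + (1 - t) *: y))].

Definition unit_vector (v : 'cV[C]_n) : Prop := \sum_i `|v i 0| ^+ 2 = 1.

Definition populations (v : 'cV[C]_n) : 'rV[R]_n :=
  \row_i complex.Re (`|v i 0| ^+ 2).

Definition Cf (f : 'rV[R]_n -> R) (v : 'cV[C]_n) : R := f (populations v).

Definition pure_state_decomp (rho : 'M[C]_n) (k : nat)
  (p : 'I_k -> R) (psi : 'I_k -> 'cV[C]_n) : Prop :=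
  [/\ forall j, 0 < p j,
      \sum_j p j = 1,
      forall j, unit_vector (psi j)
    & rho = \sum_j (p j)%:C *: (psi j *m mxdag (psi j))].

Definition avg_coherence (f : 'rV[R]_n -> R) (k : nat)
  (p : 'I_k -> R) (psi : 'I_k -> 'cV[C]_n) : R :=
  \sum_j p j * Cf f (psi j).

Definition diag_real (rho : 'M[C]_n) : 'rV[R]_n := \row_i complex.Re (rho i i).

End Defs.

From HB Require Import structures.
From mathcomp Require Import all_boot all_order all_algebra all_fingroup.
From mathcomp Require Import complex.
From mathcomp.algebra_tactics Require Import ring.
Set Implicit Arguments.
Unset Strict Implicit.
Unset Printing Implicit Defensive.
Import Order.TTheory GRing.Theory Num.Theory.
Local Open Scope ring_scope.

(* Write s_i := sqrt(rho_ii) > 0, so that rho = S * CM(rho) * S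
   with S = diag(s).  A rank-one correlation matrix M factors as M = u u^*
   where u is any column of M, and every entry of u has modulus one (the
   diagonal of M is 1).  Hence a convex decomposition CM(rho) = sum_l w_l M_l
   into rank-one correlation matrices M_l = u_l u_l^* yields
   rho = sum_l w_l psi_l psi_l^*  with  psi_l := S u_l.
   Each psi_l has populations |psi_l,i|^2 = s_i^2 = rho_ii, i.e. the diagonal
   of rho, so it is a unit vector (tr rho = 1) and C_f(psi_l) = f(diag rho)
   for every l; the average coherence is therefore f(diag rho).  Finally the
   terms with weight zero are discarded to obtain strictly positive weights.
   No property of f is needed, and n >= 2 is only used to pick a column. *)

Lemma rank1_minor (F : fieldType) (n : nat) (M : 'M[F]_n) :
  \rank M = 1%N -> forall i j k l, M i j * M k l = M i l * M k j.
Proof.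
case: n M => [|n] M hr; first by case.
have pid1 (a b : 'I_n.+1) :
    (pid_mx 1 : 'M[F]_n.+1) a b = ((a == ord0) && (b == ord0))%:R.
  by rewrite mxE; case: a b => [[|a] ha] [[|b] hb] //=; rewrite andbF.
(* M = L * pid_mx 1 * U is the outer product of a column of L and a row of U. *)
have outer x y : M x y = col_ebase M x ord0 * row_ebase M ord0 y.
  rewrite -{1}(mulmx_ebase M) hr !mxE (bigD1 ord0) //= big1 ?addr0.
    rewrite !mxE (bigD1 ord0) //= big1 ?addr0; first by rewrite pid1 eqxx mulr1.
    by move=> t /negbTE ht; rewrite pid1 ht mulr0.
  move=> t /negbTE ht; rewrite !mxE big1 ?mul0r // => r _.
  by rewrite pid1 ht andbF mulr0.
by move=> i j k l; rewrite !outer; ring.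
Qed.

Lemma sum_enum_support (V : nmodType) (k : nat) (F : 'I_k -> V)
  (P : pred 'I_k) :
  (forall l, ~~ P l -> F l = 0) ->
  \sum_(i < #|P|) F (enum_val i) = \sum_l F l.
Proof.
by move=> F0; rewrite -big_enum_val /= [RHS](bigID P) /= [X in _ = _ + X]big1 ?addr0.
Qed.

Section PureStates.
Variable R : rcfType.
Local Notation C := R[i].
Variable n : nat.

Lemma rank1_correlation_factor (M : 'M[C]_n) (i0 : 'I_n) :
  correlation_matrix M -> \rank M = 1%N ->
  (forall i j, M i j = M i i0 * (M j i0)^*) /\ (forall i, `|M i i0| ^+ 2 = 1).
Proof.
move=> [[herm _] diag1] r1.
have adj j : (M j i0)^* = M i0 j by rewrite -[in RHS]herm /mxdag !mxE.
have factor i j : M i j = M i i0 * (M j i0)^*.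
  by rewrite adj -(rank1_minor r1 i j i0 i0) diag1 mulr1.
by split=> // i; rewrite normCK -factor diag1.
Qed.

Definition sqrt_diag (rho : 'M[C]_n) (i : 'I_n) : C := sqrtC (rho i i).

Lemma rho_from_CM (rho : 'M[C]_n) : (forall i, 0 < rho i i) ->
  forall i j, rho i j = sqrt_diag rho i * sqrt_diag rho j * CM rho i j.
Proof.
move=> pos i j.
have s_neq0 k : sqrtC (rho k k) != 0 by rewrite lt0r_neq0 // sqrtC_gt0.
rewrite /CM /Delta_inv_sqrt /sqrt_diag mul_mx_diag mul_diag_mx !mxE.
by field; rewrite !s_neq0.
Qed.

Lemma rescaled_populations (rho : 'M[C]_n) (u : 'I_n -> C) :
  (forall i, 0 <= rho i i) -> (forall i, `|u i| ^+ 2 = 1) ->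
  forall i, `|(\col_k (sqrt_diag rho k * u k)) i 0| ^+ 2 = rho i i.
Proof.
move=> pos unimod i.
by rewrite mxE normrM exprMn unimod mulr1 ger0_norm ?sqrtC_ge0 // sqrtCK.
Qed.

Lemma drop_zero_weights (f : 'rV[R]_n -> R) (rho : 'M[C]_n) (k : nat)
  (w : 'I_k -> R) (psi : 'I_k -> 'cV[C]_n) :
  (forall l, 0 <= w l) -> \sum_l w l = 1 -> (forall l, unit_vector (psi l)) ->
  rho = \sum_l ((w l)%:C)%C *: (psi l *m mxdag (psi l)) ->
  exists (k' : nat) (p : 'I_k' -> R) (phi : 'I_k' -> 'cV[C]_n),
    pure_state_decomp rho p phi /\
    avg_coherence f p phi = \sum_l w l * Cf f (psi l).
Proof.
move=> w_ge0 w_sum unit rho_eq; pose P := [pred l | 0 < w l].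
have w0 l : ~~ P l -> w l = 0.
  by rewrite inE /= lt_def negb_and negbK w_ge0 orbF => /eqP.
exists #|P|, (w \o enum_val), (psi \o enum_val); split; last first.
  by apply: sum_enum_support => l /w0 ->; rewrite mul0r.
split=> [i||i|] /=.
- by have := enum_valP i; rewrite inE.
- by rewrite (sum_enum_support w0).
- exact: unit.
- by rewrite rho_eq; symmetry; apply: sum_enum_support => l /w0 ->; rewrite scale0r.
Qed.

End PureStates.

Theorem theorem2 (R : rcfType) (n : nat) (hn : (2 <= n)%N)
  (f : 'rV[R]_n -> R) (hf : F_sc f)
  (rho : 'M[R[i]]_n) (hrho : density_matrix rho)
  (hdiag : forall i, 0 < rho i i)
  (hCM : convex_comb_rank1_corr (CM rho)) :
  exists (k : nat) (p : 'I_k -> R) (psi : 'I_k -> 'cV[R[i]]_n),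
    pure_state_decomp rho p psi /\
    avg_coherence f p psi = f (diag_real rho).
Proof.
case: hCM => k [w [Ms [w_ge0 w_sum Ms_rank1 CM_eq]]].
pose i0 : 'I_n := Ordinal (ltnW hn).
pose s := sqrt_diag rho.
have factor l := rank1_correlation_factor i0 (Ms_rank1 l).1 (Ms_rank1 l).2.
pose psi l : 'cV[R[i]]_n := \col_i (s i * Ms l i i0).
have pops l i : `|psi l i 0| ^+ 2 = rho i i.
  by apply: (rescaled_populations (u := fun j => Ms l j i0)) => j;
    [exact: ltW | exact: (factor l).2].
have unit l : unit_vector (psi l).
  by rewrite /unit_vector; under eq_bigr do rewrite pops; case: hrho.
have rho_eq : rho = \sum_l ((w l)%:C)%C *: (psi l *m mxdag (psi l)).
  apply/matrixP => i j; rewrite rho_from_CM // CM_eq !summxE mulr_sumr.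
  apply: eq_bigr => l _; rewrite !mxE big_ord1 !mxE ((factor l).1 i j).
  have s_real m : (s m)^* = s m by apply/geC0_conj/ltW; rewrite sqrtC_gt0.
  (* mxdag uses the conjugation of R[i], which is Num.conj by definition. *)
  have conjcE (z : R[i]) : (z^*)%C = z^* by [].
  by rewrite conjcE rmorphM /= s_real /s; ring.
have [k' [p [phi [decomp avg_eq]]]] := drop_zero_weights f w_ge0 w_sum unit rho_eq.
exists k', p, phi; split=> //; rewrite avg_eq.
have same_pops l : populations (psi l) = diag_real rho.
  by apply/rowP => i; rewrite [LHS]mxE pops mxE.
by rewrite /Cf; under eq_bigr do rewrite same_pops; rewrite -mulr_suml w_sum mul1r.
Qed.
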